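(* Consider the optimization problem (P) defined in the context. There exists an optimal solution $(\boldsymbol\tau,\boldsymbol\varphi,\mathbf e)$ of (P) in which the source node uses all of its harvested energy, i.e. $e_1=\zeta P_t h_1\tau_0$.
   Context: Parameters: integer $K\ge1$, $T>0$, $W>0$, $\zeta\in(0,1]$, $P_t>0$, $I_p>0$, and for $k=1,\dots,K$: $h_k>0$, $f_k>0$, $\gamma_k>0$, $B_k^b>0$. Variables: $\boldsymbol\tau=(\tau_0,\tau_1,\dots,\tau_K)$, $\boldsymbol\varphi=(\varphi_1,\dots,\varphi_K)$, $\mathbf e=(e_1,\dots,e_K)$. Rate of node $k$: $R_k(\tau_k,\varphi_k,e_k)=\varphi_k W\log_2(1+\frac{e_k}{\varphi_k}\gamma_k)+(\tau_k-\varphi_k)B_k^b$ if $\varphi_k>0$, and $R_k=\tau_kB_k^b$ if $\varphi_k=0$. Problem (P): maximize $R(\boldsymbol\tau,\boldsymbol\varphi,\mathbf e)=\min_{1\le k\le K}R_k(\tau_k,\varphi_k,e_k)$ subject to: $\sum_{k=0}^K\tau_k\le T$; $0\le\tau_0$; $0\le\varphi_k\le\tau_k\le T$ for $k=1,\dots,K$; $0\le e_k\le \zeta P_t h_k\sum_{i=0}^{k-1}\tau_i$ for $k=1,\dots,K$ (harvested-energy constraint); $e_k\le \frac{I_p}{f_k}\varphi_k$ for $k=1,\dots,K$ (interference constraint). *)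

From Stdlib Require Import Reals Lra.
Open Scope R_scope.

Definition log2 (x : R) : R := ln x / ln 2.

Definition rate (W gam B tau phi e : R) : R :=
  if Rlt_dec 0 phi then phi * W * log2 (1 + e / phi * gam) + (tau - phi) * B
  else tau * B.

Fixpoint psum (f : nat -> R) (n : nat) : R :=
  match n with
  | O => 0
  | S m => psum f m + f m
  end.

(* min_{1 <= k <= n} f k  (for n >= 1; value f 1 when n = 0, never used) *)
Fixpoint minR1 (f : nat -> R) (n : nat) : R :=
  match n with
  | O => f 1%nat
  | S O => f 1%nat
  | S m => Rmin (minR1 f m) (f n)
  end.

Definition objective (K : nat) (W : R) (gam B : nat -> R)
  (tau phi e : nat -> R) : R :=
  minR1 (fun k => rate W (gam k) (B k) (tau k) (phi k) (e k)) K.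

(* Feasible set of (P).  tau : indices 0..K, phi, e : indices 1..K
   (values outside these ranges are irrelevant). *)
Definition feasible (K : nat) (T zeta Pt Ip : R) (h f : nat -> R)
  (tau phi e : nat -> R) : Prop :=
  psum tau (S K) <= T /\
  0 <= tau 0%nat /\
  (forall k : nat, (1 <= k <= K)%nat ->
     0 <= phi k /\ phi k <= tau k /\ tau k <= T /\
     0 <= e k /\
     e k <= zeta * Pt * h k * psum tau k /\
     e k <= Ip / f k * phi k).

Definition optimal (K : nat) (T W zeta Pt Ip : R) (h f gam B : nat -> R)
  (tau phi e : nat -> R) : Prop :=
  feasible K T zeta Pt Ip h f tau phi e /\
  forall tau' phi' e' : nat -> R,
    feasible K T zeta Pt Ip h f tau' phi' e' ->
    objective K W gam B tau' phi' e' <= objective K W gam B tau phi e.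

From Stdlib Require Import Reals Lra Lia.
From Corelib Require Import ssreflect.
Open Scope R_scope.

(* Node 1 can only harvest during tau_0, so its
      energy constraint reads e_1 <= zeta Pt h_1 tau_0.  Shrinking tau_0 to
      e_1 / (zeta Pt h_1) and giving the freed time to node 1 keeps every
      constraint (the total time and the partial sums tau_0 + ... + tau_(k-1),
      k >= 2, are unchanged) and does not decrease the objective, since node 1's
      rate is increasing in tau_1.  Hence any optimum can be made tight.

   Writing
      e_k = r_k phi_k, the rate becomes a continuous function of (tau, phi, r),
      and the feasible points, encoded as row vectors, form a closed and bounded,
      hence compact, set of R^(3K+1).  By Weierstrass the objective attains its
      maximum there; every feasible point of (P) is represented in this set with
      the same objective value, so the maximiser decodes to an optimum of (P). *)

Lemma psum_ext (u v : nat -> R) (n : nat) :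
  (forall i, (i < n)%nat -> u i = v i) -> psum u n = psum v n.
Proof.
elim: n => [|n IH] Huv //=.
rewrite IH; first by move=> i Hi; apply: Huv; lia.
by rewrite Huv //; lia.
Qed.

Lemma psum_mono (u : nat -> R) (m n : nat) :
  (forall i, (i < n)%nat -> 0 <= u i) -> (m <= n)%nat -> psum u m <= psum u n.
Proof.
move=> Hu Hmn; elim: Hmn Hu => [|n' Hmn IH] Hu /=; first lra.
have := Hu n' ltac:(lia).
have : psum u m <= psum u n' by apply: IH => i Hi; apply: Hu; lia.
lra.
Qed.

Lemma psum_ge_term (u : nat -> R) (n i : nat) :
  (forall j, (j < n)%nat -> 0 <= u j) -> (i < n)%nat -> u i <= psum u n.
Proof.
move=> Hu Hi; apply: Rle_trans (psum_mono u (S i) n Hu Hi) => /=.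
have : 0 <= psum u i by apply: (psum_mono u 0 i) => [j Hj|]; [apply: Hu; lia | lia].
lra.
Qed.

Lemma minR1_mono (u v : nat -> R) (n : nat) :
  (1 <= n)%nat -> (forall k, (1 <= k <= n)%nat -> u k <= v k) ->
  minR1 u n <= minR1 v n.
Proof.
elim: n => [|[|n] IH] Hn Huv; [lia | apply: Huv; lia |].
have Hprefix : minR1 u (S n) <= minR1 v (S n).
  by apply: IH => [|k Hk]; [lia | apply: Huv; lia].
have Hlast : u (S (S n)) <= v (S (S n)) by apply: Huv; lia.
change (Rmin (minR1 u (S n)) (u (S (S n))) <= Rmin (minR1 v (S n)) (v (S (S n)))).
by move: Hprefix Hlast; rewrite /Rmin; case: Rle_dec; case: Rle_dec; lra.
Qed.

Lemma minR1_ext (u v : nat -> R) (n : nat) :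
  (1 <= n)%nat -> (forall k, (1 <= k <= n)%nat -> u k = v k) ->
  minR1 u n = minR1 v n.
Proof.
move=> Hn Huv; apply: Rle_antisym; apply: minR1_mono => // k Hk;
  rewrite Huv //; exact: Rle_refl.
Qed.

Lemma feasible_ext (K : nat) (T zeta Pt Ip : R) (h f : nat -> R)
    (tau phi e tau' phi' e' : nat -> R) :
  (forall i, (i <= K)%nat -> tau i = tau' i) ->
  (forall k, (1 <= k <= K)%nat -> phi k = phi' k /\ e k = e' k) ->
  feasible K T zeta Pt Ip h f tau phi e -> feasible K T zeta Pt Ip h f tau' phi' e'.
Proof.
move=> Htau Hpe [Hsum [Htau0 Hk]].
have Hpsum : forall n, (n <= S K)%nat -> psum tau n = psum tau' n.
  by move=> n Hn; apply: psum_ext => i Hi; apply: Htau; lia.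
split; first by rewrite -Hpsum.
split; first by rewrite -Htau //; lia.
move=> k Hk'; have [<- <-] := Hpe k Hk'.
rewrite -Htau -?Hpsum; try lia.
exact: Hk.
Qed.

Lemma objective_ext (K : nat) (W : R) (gam B tau phi e tau' phi' e' : nat -> R) :
  (1 <= K)%nat ->
  (forall k, (1 <= k <= K)%nat -> tau k = tau' k /\ phi k = phi' k /\ e k = e' k) ->
  objective K W gam B tau phi e = objective K W gam B tau' phi' e'.
Proof.
move=> HK Hk; apply: minR1_ext => // k Hk'.
by have [-> [-> ->]] := Hk k Hk'.
Qed.

Lemma feasible_tau_range {K : nat} {T zeta Pt Ip : R} {h f tau phi e : nat -> R} :
  feasible K T zeta Pt Ip h f tau phi e -> forall i, (i <= K)%nat -> 0 <= tau i <= T.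
Proof.
move=> [Hsum [Htau0 Hk]].
have Hnonneg : forall i, (i < S K)%nat -> 0 <= tau i.
  move=> [|i] Hi //; have Hi' : (1 <= S i <= K)%nat by lia.
  by have [? [? _]] := Hk (S i) Hi'; lra.
move=> i Hi; have HiK : (i < S K)%nat by lia.
by have := psum_ge_term tau (S K) i Hnonneg HiK; have := Hnonneg i HiK; lra.
Qed.

Lemma feasible_zero (K : nat) (T zeta Pt Ip : R) (h f : nat -> R) :
  0 <= T -> feasible K T zeta Pt Ip h f (fun _ => 0) (fun _ => 0) (fun _ => 0).
Proof.
move=> HT.
have Hpsum0 : forall n, psum (fun _ => 0) n = 0 by elim=> [|n IH] //=; rewrite IH; ring.
rewrite /feasible !Hpsum0; split; [lra | split; [lra | move=> k _]].
by rewrite Hpsum0 !Rmult_0_r; repeat split; lra.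
Qed.

Lemma rate_mono_tau (W g Bk tau tau' phi e : R) :
  0 < Bk -> tau <= tau' -> rate W g Bk tau phi e <= rate W g Bk tau' phi e.
Proof. by move=> HB Ht; rewrite /rate; case: Rlt_dec => _; nra. Qed.

(* The
   absolute value is harmless for r >= 0 and makes the expression continuous
   in (tau, phi, r) on all of R^3, which is what the compactness argument needs. *)
Definition rate_of_ratio (W g Bk tau phi r : R) : R :=
  tau * Bk + phi * (W * log2 (1 + Rabs (r * g)) - Bk).

Lemma rate_ratio (W g Bk tau phi r : R) :
  0 <= phi -> 0 <= r -> 0 <= g ->
  rate W g Bk tau phi (r * phi) = rate_of_ratio W g Bk tau phi r.
Proof.
move=> Hphi Hr Hg.
have Hrg : Rabs (r * g) = r * g by apply: Rabs_right; nra.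
rewrite /rate /rate_of_ratio Hrg.
case: Rlt_dec => Hphi'.
- have -> : r * phi / phi * g = r * g by field; lra.
  ring.
- have -> : phi = 0 by lra.
  ring.
Qed.

Lemma continuity_log2_1abs (y : R) :
  continuity_pt (fun y => log2 (1 + Rabs y)) y.
Proof.
have Hpos : 0 < 1 + Rabs y by have := Rabs_pos y; lra.
rewrite /log2 /Rdiv; apply: continuity_pt_mult; last exact: continuity_pt_const.
apply: (continuity_pt_comp (fun y => 1 + Rabs y) ln).
  by apply: continuity_pt_plus; [exact: continuity_pt_const | exact: Rcontinuity_abs].
by apply: derivable_continuous_pt; exists (/ (1 + Rabs y)); exact: derivable_pt_lim_ln.
Qed.

(* On a feasible slot (0 <= e <= c phi, c >= 0) the energy-to-time ratio e / phi
   lies in [0, c] and recovers e; for phi = 0 this uses the convention / 0 = 0. *)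
Lemma ratio_spec (phi e c : R) :
  0 <= phi -> 0 <= e -> e <= c * phi -> 0 <= c ->
  0 <= e / phi /\ e / phi <= c /\ e = e / phi * phi.
Proof.
move=> Hphi He Hc Hc0; case: (Req_dec phi 0) => [Hz | Hnz].
  have -> : e = 0 by rewrite Hz in Hc; lra.
  by rewrite Hz /Rdiv Rinv_0; repeat split; lra.
have Hinv : 0 < / phi by apply: Rinv_0_lt_compat; lra.
split; [|split].
- by rewrite /Rdiv; apply: Rmult_le_pos; lra.
- apply: (Rmult_le_reg_r phi); first lra.
  by rewrite /Rdiv Rmult_assoc Rinv_l; lra.
- by field.
Qed.

(* Shrink tau_0 to e_1 / (zeta Pt h_1) and hand the freed time to node 1: the
   total time and all partial sums tau_0 + ... + tau_(k-1), k >= 2, are unchanged,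
   and node 1's rate grows since it is increasing in tau_1. *)
Lemma shift_slack (K : nat) (T W zeta Pt Ip : R) (h f gam B : nat -> R)
    (tau phi e : nat -> R) :
  (1 <= K)%nat -> 0 < zeta * Pt * h 1%nat -> 0 < B 1%nat ->
  feasible K T zeta Pt Ip h f tau phi e ->
  exists tau' : nat -> R, feasible K T zeta Pt Ip h f tau' phi e /\
    objective K W gam B tau phi e <= objective K W gam B tau' phi e /\
    e 1%nat = zeta * Pt * h 1%nat * tau' 0%nat.
Proof.
move=> HK; set c := zeta * Pt * h 1%nat => Hc HB Hfe; have [Hsum [_ Hk]] := Hfe.
have [Hphi1 [Hphitau1 [_ [He1 [Henergy1 Hinterf1]]]]] := Hk 1%nat ltac:(lia).
rewrite /= Rplus_0_l -/c in Henergy1.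
set t0 := e 1%nat / c.
set tau' := fun i => match i with
  | O => t0 | 1%nat => tau 1%nat + (tau 0%nat - t0) | _ => tau i end.
have Ht0 : 0 <= t0 by rewrite /t0 /Rdiv; apply: Rmult_le_pos; [|left; apply: Rinv_0_lt_compat]; lra.
have Ht0tau : t0 <= tau 0%nat.
  by apply: (Rmult_le_reg_r c) => //; rewrite /t0 /Rdiv Rmult_assoc Rinv_l; lra.
have Hpsum : forall n, (2 <= n)%nat -> psum tau' n = psum tau n.
  move=> n Hn; have -> : n = S (S (n - 2)) by lia.
  elim: (n - 2)%nat => [|m IH]; first by rewrite /= /tau'; ring.
  change (psum tau' (S (S m)) + tau (S (S m)) = psum tau (S (S m)) + tau (S (S m))).
  by rewrite IH.
have Htau01 : tau 0%nat + tau 1%nat <= T.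
  have Htau_nonneg : forall i, (i < S K)%nat -> 0 <= tau i.
    move=> i Hi; have HiK : (i <= K)%nat by lia.
    by have [] := feasible_tau_range Hfe i HiK.
  have H2K : (2 <= S K)%nat by lia.
  have := psum_mono tau 2 (S K) Htau_nonneg H2K.
  change (psum tau 2) with (0 + tau 0%nat + tau 1%nat); lra.
exists tau'; split; [|split].
- split; first by rewrite Hpsum //; lia.
  split; first by rewrite /tau'.
  move=> [|[|k]] Hk'; [lia | |].
  + rewrite /= Rplus_0_l -/c /tau'; repeat split; try lra.
    by right; rewrite /t0; field; lra.
  + have H2k : (2 <= S (S k))%nat by lia.
    by rewrite (Hpsum _ H2k); exact: Hk.
- apply: minR1_mono => // [[|[|k]]] Hk'; [lia | |].
  + by apply: rate_mono_tau => //; rewrite /tau'; lra.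
  + exact: Rle_refl.
- by rewrite /tau' /t0; field; lra.
Qed.

From mathcomp Require all_boot all_order all_algebra all_classical.
From mathcomp Require topology normedtype derive Rstruct Rstruct_topology zify.

Module OptimalExistence.
Import all_boot all_order all_algebra all_classical.
Import topology normedtype derive Rstruct Rstruct_topology zify.
Local Open Scope classical_set_scope.
Local Open Scope R_scope.

Section RealContinuity.
Context {T : topologicalType}.
Implicit Types u v : T -> R.

Lemma continuous_Rplus u v :
  continuous u -> continuous v -> continuous (fun x => u x + v x).
Proof. by move=> cu cv x; exact: (@continuousD R R^o T u v x (cu x) (cv x)). Qed.

Lemma continuous_Rmult u v :
  continuous u -> continuous v -> continuous (fun x => u x * v x).
Proof. by move=> cu cv x; exact: (@continuousM R T u v x (cu x) (cv x)). Qed.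

Lemma continuous_Rmin u v :
  continuous u -> continuous v -> continuous (fun x => Rmin (u x) (v x)).
Proof.
move=> cu cv; have -> : (fun x => Rmin (u x) (v x)) = (u \min v)%R.
  by apply: funext => y /=; rewrite RminE.
by move=> x; exact: (@continuous_min _ T u v x (cu x) (cv x)).
Qed.

Lemma continuous_comp_pt (g : R -> R) u :
  (forall y, continuity_pt g y) -> continuous u -> continuous (fun x => g (u x)).
Proof.
move=> cg cu x; apply: continuous_comp; first exact: cu.
exact/continuity_pt_cvg.
Qed.

Lemma continuous_psum (F : T -> nat -> R) (n : nat) :
  (forall i, continuous (fun x => F x i)) -> continuous (fun x => psum (F x) n).
Proof.
move=> cF; elim: n => [|n IH] /=; first exact: cst_continuous.
exact: continuous_Rplus.
Qed.

Lemma continuous_minR1 (F : T -> nat -> R) (n : nat) :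
  (forall i, continuous (fun x => F x i)) -> continuous (fun x => minR1 (F x) n).
Proof.
move=> cF; elim: n => [|[|n] IH]; [exact: cF | exact: cF |].
exact: (continuous_Rmin (fun x => minR1 (F x) n.+1)).
Qed.

Lemma closed_Rle u v :
  continuous u -> continuous v -> closed [set x | u x <= v x].
Proof.
move=> cu cv.
have -> : [set x | u x <= v x] = (fun x => v x - u x) @^-1` [set y : R | (0 <= y)%R].
  apply/seteqP; split => x /=.
  - by move=> Huv; apply/RleP; rewrite -R0E; lra.
  - by move/RleP; rewrite -R0E; lra.
apply: preimage_closed; last exact: closed_ge.
by move=> x _; exact: (@continuousB _ R^o T v u x (cv x) (cu x)).
Qed.

Lemma closed_and (P Q : T -> Prop) :
  closed [set x | P x] -> closed [set x | Q x] -> closed [set x | P x /\ Q x].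
Proof. exact: closedI. Qed.

Lemma closed_forall (I : Type) (P : I -> Prop) (Q : I -> T -> Prop) :
  (forall i, P i -> closed [set x | Q i x]) -> closed [set x | forall i, P i -> Q i x].
Proof.
move=> cQ; have -> : [set x | forall i, P i -> Q i x] = \bigcap_(i in P) [set x | Q i x].
  by apply/seteqP; split => x /= Hx i /Hx.
exact: closed_bigI.
Qed.

End RealContinuity.

Section Parametrization.
Variables (K : nat) (T W zeta Pt Ip : R) (h f gam B : nat -> R).
Hypothesis HK : (1 <= K)%coq_nat.
Hypothesis HT : 0 <= T.
Hypothesis HIp : 0 <= Ip.
Hypothesis Hf : forall k : nat, (1 <= k)%coq_nat /\ (k <= K)%coq_nat -> 0 < f k.
Hypothesis Hgam : forall k : nat, (1 <= k)%coq_nat /\ (k <= K)%coq_nat -> 0 <= gam k.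

(* A schedule is encoded by a row vector of length (K + 1) + K + K holding
   tau_0..tau_K, then phi_1..phi_K, then the ratios r_k = e_k / phi_k. *)
Definition dim : nat := (K + K + K)%N.
Definition coord (v : 'rV[R]_dim.+1) (j : nat) : R := v ord0 (inord j).
Definition tau_of (v : 'rV[R]_dim.+1) (i : nat) : R := coord v i.
Definition phi_of (v : 'rV[R]_dim.+1) (k : nat) : R := coord v (K + k)%N.
Definition ratio_of (v : 'rV[R]_dim.+1) (k : nat) : R := coord v (K + K + k)%N.
Definition energy_of (v : 'rV[R]_dim.+1) (k : nat) : R := ratio_of v k * phi_of v k.

Definition pack (a b c : nat -> R) : 'rV[R]_dim.+1 :=
  \row_(j < dim.+1) if (j <= K)%N then a j
                    else if (j <= K + K)%N then b (j - K)%N else c (j - (K + K))%N.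

Lemma continuous_coord (j : nat) : continuous (fun v => coord v j).
Proof. exact: coord_continuous. Qed.

Lemma pack_tau a b c i : (i <= K)%coq_nat -> tau_of (pack a b c) i = a i.
Proof.
move=> Hi; have Hdim : (i < dim.+1)%N by rewrite /dim; lia.
have HiK : (i <= K)%N by lia.
by rewrite /tau_of /coord mxE (inordK Hdim) /= HiK.
Qed.

Lemma pack_phi a b c k : (1 <= k)%coq_nat /\ (k <= K)%coq_nat ->
  phi_of (pack a b c) k = b k.
Proof.
move=> Hk; have Hdim : (K + k < dim.+1)%N by rewrite /dim; lia.
have H1 : (K + k <= K)%N = false by lia.
have H2 : (K + k <= K + K)%N by lia.
by rewrite /phi_of /coord mxE (inordK Hdim) /= H1 H2 addKn.
Qed.

Lemma pack_ratio a b c k : (1 <= k)%coq_nat /\ (k <= K)%coq_nat ->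
  ratio_of (pack a b c) k = c k.
Proof.
move=> Hk; have Hdim : (K + K + k < dim.+1)%N by rewrite /dim; lia.
have H1 : (K + K + k <= K)%N = false by lia.
have H2 : (K + K + k <= K + K)%N = false by lia.
by rewrite /ratio_of /coord mxE (inordK Hdim) /= H1 H2 addKn.
Qed.

Ltac solve_continuous :=
  rewrite /energy_of /tau_of /phi_of /ratio_of /Rminus;
  repeat first
    [ exact: cst_continuous
    | exact: continuous_coord
    | apply: (continuous_comp_pt _ _ continuity_log2_1abs)
    | apply: continuous_Rplus
    | apply: continuous_Rmult
    | apply: continuous_psum => ?
    | apply: continuous_minR1 => ? ].

Definition box (M : R) : set 'rV[R]_dim.+1 :=
  [set v | forall j, (`[0, M]%classic : set R) (v ord0 j)].

Lemma box_compact M : compact (box M).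
Proof.
by apply: (@rV_compact _ _ (fun _ => `[0, M]%classic)) => _; exact: segment_compact.
Qed.

Lemma box_coord M v j : box M v -> 0 <= coord v j <= M.
Proof. by move/(_ (inord j)); rewrite /= in_itv /= => /andP[/RleP ? /RleP ?]. Qed.

Lemma box_pack M a b c :
  (forall i, (i <= K)%coq_nat -> 0 <= a i <= M) ->
  (forall k, (1 <= k)%coq_nat /\ (k <= K)%coq_nat -> 0 <= b k <= M) ->
  (forall k, (1 <= k)%coq_nat /\ (k <= K)%coq_nat -> 0 <= c k <= M) ->
  box M (pack a b c).
Proof.
move=> Ha Hb Hc [j Hj]; rewrite /= mxE /= in_itv /=.
suff [H0 HM] : 0 <= (if (j <= K)%N then a j else if (j <= K + K)%N then b (j - K)%N
                     else c (j - (K + K))%N) <= M by apply/andP; split; apply/RleP.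
case: ifP => H1; first by apply: Ha; lia.
by case: ifP => H2; [apply: Hb | apply: Hc]; rewrite /dim in Hj; lia.
Qed.

(* The feasible set of (P) read in the parameters (tau, phi, r), with the
   interference constraint strengthened to r_k <= Ip / f_k (equivalent when
   phi_k > 0, and harmless when phi_k = 0). *)
Definition feasible_params : set 'rV[R]_dim.+1 :=
  [set v | feasible K T zeta Pt Ip h f (tau_of v) (phi_of v) (energy_of v) /\
           forall k : nat, (1 <= k)%coq_nat /\ (k <= K)%coq_nat -> ratio_of v k <= Ip / f k].

Lemma feasible_params_closed : closed feasible_params.
Proof.
rewrite /feasible_params /feasible.
repeat first [ apply: closed_and | apply: closed_forall => ? _ | apply: closed_Rle ];
  solve_continuous.
Qed.

Definition param_obj (v : 'rV[R]_dim.+1) : R :=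
  minR1 (fun k => rate_of_ratio W (gam k) (B k) (tau_of v k) (phi_of v k) (ratio_of v k)) K.

Lemma param_obj_continuous : continuous param_obj.
Proof. by apply: continuous_minR1 => k; rewrite /rate_of_ratio; solve_continuous. Qed.

Lemma param_obj_objective M v : box M v ->
  objective K W gam B (tau_of v) (phi_of v) (energy_of v) = param_obj v.
Proof.
move=> Hv; apply: minR1_ext => // k Hk.
have := box_coord M v (K + k)%N Hv; have := box_coord M v (K + K + k)%N Hv.
rewrite /energy_of => Hr Hphi; apply: rate_ratio; rewrite /phi_of /ratio_of; try lra.
exact: Hgam.
Qed.

(* A common bound for all entries of an encoded feasible schedule: slot lengths
   are at most T and ratios at most Ip / f_k. *)
Definition bound : R := T + psum (fun k => Rabs (Ip / f k)) K.+1.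

Lemma T_le_bound : T <= bound.
Proof.
have := psum_mono (fun k => Rabs (Ip / f k)) 0 K.+1 (fun i _ => Rabs_pos _) (Nat.le_0_l _).
by rewrite /bound /=; lra.
Qed.

Lemma ratio_le_bound k : (k < K.+1)%coq_nat -> Ip / f k <= bound.
Proof.
move=> Hk; have := psum_ge_term (fun k => Rabs (Ip / f k)) K.+1 k (fun i _ => Rabs_pos _) Hk.
by have := Rle_abs (Ip / f k); rewrite /bound; lra.
Qed.

Definition search_set : set 'rV[R]_dim.+1 := box bound `&` feasible_params.

Lemma search_set_compact : compact search_set.
Proof. exact: compact_closedI (box_compact bound) feasible_params_closed. Qed.

Lemma search_set_covers tau phi e :
  feasible K T zeta Pt Ip h f tau phi e ->
  exists2 v, search_set v & param_obj v = objective K W gam B tau phi e.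
Proof.
move=> Hfe; have [_ [_ Hk]] := Hfe.
set v := pack tau phi (fun k => e k / phi k).
have Hratio k : (1 <= k)%coq_nat /\ (k <= K)%coq_nat ->
    0 <= e k / phi k /\ e k / phi k <= Ip / f k /\ e k = e k / phi k * phi k.
  move=> Hk'; have [? [_ [_ [? [_ ?]]]]] := Hk k Hk'.
  by apply: ratio_spec => //; rewrite /Rdiv; apply: Rmult_le_pos; [|left; apply: Rinv_0_lt_compat; apply: Hf].
have Htau_bound i : (i <= K)%coq_nat -> 0 <= tau i <= bound.
  by move=> Hi; have := feasible_tau_range Hfe i Hi; have := T_le_bound; lra.
have Hv : search_set v.
  split.
  - apply: box_pack => [i Hi | k Hk' | k Hk'].
    + exact: Htau_bound.
    + have HkK : (k <= K)%coq_nat by lia.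
      by have [? [? _]] := Hk k Hk'; have := Htau_bound k HkK; lra.
    + have HkK : (k < K.+1)%coq_nat by lia.
      by have [? [? _]] := Hratio k Hk'; have := ratio_le_bound k HkK; lra.
  - split; last by move=> k Hk'; rewrite pack_ratio //; have [_ []] := Hratio k Hk'.
    apply: feasible_ext Hfe => [i Hi | k Hk']; first by rewrite pack_tau.
    by rewrite /energy_of pack_phi // pack_ratio //; have [_ [_ <-]] := Hratio k Hk'.
exists v => //.
rewrite -(param_obj_objective bound v) //; last by case: Hv.
apply: objective_ext => // k Hk'.
rewrite /energy_of pack_tau ?pack_phi ?pack_ratio //; last lia.
by have [_ [_ <-]] := Hratio k Hk'.
Qed.

(* Weierstrass: the continuous param_obj attains its maximum on the nonempty
   compact search_set, and decoding the maximiser gives an optimum of (P). *)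
Theorem optimal_exists :
  exists tau phi e : nat -> R, optimal K T W zeta Pt Ip h f gam B tau phi e.
Proof.
have [v0 Hv0 _] := search_set_covers _ _ _ (feasible_zero K T zeta Pt Ip h f HT).
have [c Hc Hmax] := compact_EVT_max (ex_intro _ v0 Hv0) search_set_compact
  (continuous_subspaceT param_obj_continuous).
rewrite in_setE in Hc; have [Hc_box [Hc_feas _]] := Hc.
exists (tau_of c), (phi_of c), (energy_of c); split => // tau phi e Hfe.
have [v Hv <-] := search_set_covers _ _ _ Hfe.
rewrite (param_obj_objective _ _ Hc_box); apply/RleP; apply: Hmax.
by rewrite in_setE.
Qed.

End Parametrization.
End OptimalExistence.

Theorem lemma3 (K : nat) (T W zeta Pt Ip : R) (h f gam B : nat -> R) :
  (1 <= K)%nat -> 0 < T -> 0 < W -> 0 < zeta -> zeta <= 1 ->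
  0 < Pt -> 0 < Ip ->
  (forall k : nat, (1 <= k <= K)%nat ->
     0 < h k /\ 0 < f k /\ 0 < gam k /\ 0 < B k) ->
  exists tau phi e : nat -> R,
    optimal K T W zeta Pt Ip h f gam B tau phi e /\
    e 1%nat = zeta * Pt * h 1%nat * tau 0%nat.
Proof.
move=> HK HT _ Hzeta _ HPt HIp Hpar.
have Hf k : (1 <= k <= K)%nat -> 0 < f k by move=> Hk; have [_ [? _]] := Hpar k Hk.
have Hgam k : (1 <= k <= K)%nat -> 0 <= gam k by move=> Hk; have [_ [_ [? _]]] := Hpar k Hk; lra.
have [tau [phi [e [Hfe Hopt]]]] := OptimalExistence.optimal_exists K T W zeta Pt Ip h f gam B
  HK (Rlt_le _ _ HT) (Rlt_le _ _ HIp) Hf Hgam.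
have H1K : (1 <= 1 <= K)%nat by lia.
have [Hh1 [_ [_ HB1]]] := Hpar 1%nat H1K.
have Hc : 0 < zeta * Pt * h 1%nat by apply: Rmult_lt_0_compat => //; apply: Rmult_lt_0_compat.
have [tau' [Hfe' [Hle He1]]] := shift_slack K T W zeta Pt Ip h f gam B tau phi e HK Hc HB1 Hfe.
exists tau', phi, e; split => //; split => // tau'' phi'' e'' Hfe''.
exact: Rle_trans (Hopt _ _ _ Hfe'') Hle.
Qed.
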